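(* Let $q$ be a positive integer and let $\mathcal{T}_q=(\tau_1,\ldots,\tau_q)$ be the permutation ideal. Identify each vertex $\ell_{i,j}$ ($1\le i\le j\le q$) of $\mathbb{M}_q^2$ with the monomial $\tau_i\tau_j$. Then the Scarf complex of $\mathcal{T}_q^{\,2}$ coincides with $\mathbb{M}_q^2$, i.e. $\operatorname{Scarf}(\mathcal{T}_q^{\,2})=\mathbb{M}_q^2$.
   Context: Permutation ideal: let $S_q$ be the symmetric group on $[q]=\{1,\ldots,q\}$; for $\sigma\in S_q$ written in one-line notation $\sigma=i_1i_2\cdots i_q$, $\sigma(j)=i_j$. Let $K$ be a field and $S_{\mathcal{T}}=K[x_\sigma:\sigma\in S_q]$ (one variable per permutation). For $i\in[q]$ put $\tau_i=\prod_{\sigma\in S_q}x_\sigma^{\sigma(i)}$, and $\mathcal{T}_q=(\tau_1,\ldots,\tau_q)$. The monomials $\tau_i\tau_j$, $1\le i\le j\le q$, are pairwise distinct and form the minimal generating set of $\mathcal{T}_q^{\,2}$. $\mathbb{M}_q^2$: vertex set $\{\ell_{i,j}:1\le i\le j\le q\}$, $\mathcal{M}=\{\ell_{i,j}:i<j\}$, facets $\mathcal{M}_i=\mathcal{M}\cup\{\ell_{i,i}\}$, $i\in[q]$; $\mathbb{M}_q^2=\langle\mathcal{M}_1,\ldots,\mathcal{M}_q\rangle$ is the simplicial complex with these facets. Scarf complex: for a monomial ideal $J$ minimally generated by monomials $g_1,\ldots,g_r$, the Taylor complex $\operatorname{Taylor}(J)$ is the full simplex on vertices $g_1,\ldots,g_r$,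 each face $\gamma$ labeled by $m_\gamma=\operatorname{lcm}$ of its vertices. $\operatorname{Scarf}(J)=\{\gamma\in\operatorname{Taylor}(J): m_\gamma\ne m_{\gamma'}\text{ for all }\gamma'\in\operatorname{Taylor}(J),\ \gamma'\neq\gamma\}$. *)

From mathcomp Require Import all_boot all_fingroup.
Set Implicit Arguments. Unset Strict Implicit. Unset Printing Implicit Defensive.

(* Monomials in the variables x_sigma (sigma : {perm 'I_q}) are represented by
   their exponent vectors; product = pointwise sum, lcm = pointwise max,
   the monomial 1 = the zero vector.  Permutations of [q] are permutations of
   'I_q = {0,..,q-1}; the 1-based value sigma(i) is (sigma i).+1. *)
Definition monom (q : nat) := {ffun {perm 'I_q} -> nat}.

Definition tau (q : nat) (i : 'I_q) : monom q := [ffun s : {perm 'I_q} => (s i).+1].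

Definition mmul (q : nat) (m n : monom q) : monom q := [ffun s => m s + n s].

Definition vert (q : nat) := {p : 'I_q * 'I_q | p.1 <= p.2}.

Definition gen (q : nat) (v : vert q) : monom q :=
  mmul (tau (sval v).1) (tau (sval v).2).

(* Generic Taylor / Scarf complexes for a monomial ideal minimally generated
   by the family g indexed by the finite type I; faces are subsets of I. *)
Definition lcm_label (q : nat) (I : finType) (g : I -> monom q) (A : {set I}) : monom q :=
  [ffun s => \max_(v in A) g v s].

Definition Taylor (q : nat) (I : finType) (g : I -> monom q) : {set {set I}} :=
  [set: {set I}].

Definition Scarf (q : nat) (I : finType) (g : I -> monom q) : {set {set I}} :=
  [set A in Taylor g | [forall B in Taylor g, (B != A) ==> (lcm_label g B != lcm_label g A)]].

Definition Mset (q : nat) : {set vert q} := [set v : vert q | (sval v).1 < (sval v).2].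

Definition facetM (q : nat) (i : 'I_q) : {set vert q} :=
  Mset q :|: [set v : vert q | ((sval v).1 == i) && ((sval v).2 == i)].

Definition Mq2 (q : nat) : {set {set vert q}} :=
  [set A : {set vert q} | [exists i : 'I_q, A \subset facetM i]].

From mathcomp Require Import all_boot all_fingroup zify.

(* A face A is in the Scarf complex iff no generator g_w divides the lcm of
   A \ {w}, for any vertex w (in A or not).  The exponent of x_s in tau_i tau_j
   is s(i) + s(j) + 2, so a permutation s ranking a first and b second makes
   tau_a tau_b strictly the largest product in the variable x_s, except for
   tau_a^2.  If A contains at most one l_{i,i}, choosing a with l_{a,a} not in
   A shows that every tau_x tau_y escapes lcm(A \ {l_{x,y}}).  If A contains
   l_{i,i} and l_{j,j} with i < j, then tau_i tau_j divides
   lcm(tau_i^2, tau_j^2), so adding or removing l_{i,j} keeps the label. *)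

Set Implicit Arguments.
Unset Strict Implicit.
Unset Printing Implicit Defensive.

Definition mdvd (q : nat) (m n : monom q) : bool := [forall s, m s <= n s].

Section ScarfCriterion.

Variables (q : nat) (I : finType) (g : I -> monom q).

Lemma mdvd_trans : transitive (@mdvd q).
Proof.
move=> n m p /forallP mn /forallP np; apply/forallP => s.
exact: leq_trans (mn s) (np s).
Qed.

Lemma mdvd_lcm_label (A : {set I}) w : w \in A -> mdvd (g w) (lcm_label g A).
Proof. by move=> wA; apply/forallP => s; rewrite ffunE; apply: leq_bigmax_cond. Qed.

Lemma mdvd_lcm_labelS (A B : {set I}) :
  A \subset B -> mdvd (lcm_label g A) (lcm_label g B).
Proof.
move=> /subsetP AB; apply/forallP => s; rewrite ffunE.
by apply/bigmax_leqP => v /AB vB; move/forallP: (mdvd_lcm_label vB); apply.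
Qed.

Lemma lcm_label_setU1 (A : {set I}) w :
  mdvd (g w) (lcm_label g A) -> lcm_label g (w |: A) = lcm_label g A.
Proof.
move=> /forallP wA; apply/ffunP => s; apply/eqP; rewrite eqn_leq.
move/forallP: (mdvd_lcm_labelS (subsetUr [set w] A)) => -> /[!andbT].
rewrite ffunE; apply/bigmax_leqP => v /setU1P [-> | vA]; first exact: wA.
by move/forallP: (mdvd_lcm_label vA); apply.
Qed.

Lemma ScarfP (A : {set I}) :
  reflect (forall w, ~~ mdvd (g w) (lcm_label g (A :\ w))) (A \in Scarf g).
Proof.
rewrite inE /Taylor in_setT /=; apply: (iffP forall_inP) => [scarfA w | sepA B _].
  apply/negP => dvd_w; have [wA | wA] := boolP (w \in A).
    have lcmAw : lcm_label g (A :\ w) = lcm_label g A.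
      by rewrite -[in RHS](setD1K wA) lcm_label_setU1.
    have := scarfA _ (in_setT (A :\ w)); rewrite lcmAw eqxx implybF negbK.
    by move=> /eqP/setP/(_ w); rewrite setD11 wA.
  have AwA : A :\ w = A by apply/setDidPl; rewrite disjoint_sym disjoints1.
  rewrite AwA in dvd_w.
  have := scarfA _ (in_setT (w |: A)); rewrite lcm_label_setU1 // eqxx implybF negbK.
  by move=> /eqP/setP/(_ w); rewrite setU11 (negbTE wA).
apply/implyP => BA; apply/negP => /eqP lcmBA.
have [BsubA | /subsetPn [w wB wA]] := boolP (B \subset A); last first.
  move: (sepA w); rewrite (mdvd_trans (mdvd_lcm_label wB)) //.
  by rewrite lcmBA mdvd_lcm_labelS // subsetD1 subxx.
have [w wA wB] : exists2 w, w \in A & w \notin B.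
  by apply/subsetPn; apply: contra BA => AsubB; rewrite eqEsubset BsubA.
move: (sepA w); rewrite (mdvd_trans (mdvd_lcm_label wA)) //.
by rewrite -lcmBA mdvd_lcm_labelS // subsetD1 BsubA.
Qed.

End ScarfCriterion.

Lemma exists_perm_pair (T : finType) (a b a' b' : T) :
  (a == b) = (a' == b') -> exists s : {perm T}, s a = a' /\ s b = b'.
Proof.
move=> eq_ab; pose s1 := tperm a a'; have s1a : s1 a = a' := tpermL a a'.
exists (s1 * tperm (s1 b) b')%g; rewrite !permM tpermL s1a; split=> //.
case: eqVneq eq_ab => [<- /esym/eqP <- | ab /esym/negbT a'b'].
  by rewrite s1a tpermL.
have s1b : s1 b != a' by rewrite -s1a (inj_eq perm_inj) eq_sym.
by rewrite tpermD // eq_sym.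
Qed.

Lemma top2_sum_lt (T : eqType) (f : T -> nat) (a b c d : T) :
    f b <= f a -> (a != b -> f b < f a) -> (forall z, z != a -> z != b -> f z < f b) ->
    ~~ [&& c == a & d == a] -> ~~ [&& c == a & d == b] -> ~~ [&& c == b & d == a] ->
  f c + f d < f a + f b.
Proof.
move=> ba ab_lt below.
have rank z : [\/ z = a, z = b | f z < f b].
  have [-> | za] := eqVneq z a; first exact: Or31.
  have [-> | zb] := eqVneq z b; first exact: Or32.
  by apply: Or33; apply: below.
case: (rank c) => [->|->|fc]; case: (rank d) => [->|->|fd];
  rewrite ?eqxx ?andbT ?andbF //=; try lia.
by rewrite eq_sym => _ /ab_lt; lia.
Qed.

Section PermutationIdeal.

Variable n : nat.
Local Notation q := n.+1.

Lemma perm_top2 (a b : 'I_q) : exists s : {perm 'I_q},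
  [/\ s b <= s a, a != b -> s b < s a & forall c, c != a -> c != b -> s c < s b].
Proof.
have n_gt0 : a != b -> 0 < n.
  by rewrite -val_eqE /=; have := ltn_ord a; have := ltn_ord b; lia.
have inordE : (inord n.-1 : 'I_q) = n.-1 :> nat by rewrite inordK // ltnS leq_pred.
pose b' : 'I_q := if a == b then ord_max else inord n.-1.
have [s [sa sb]] : exists s : {perm 'I_q}, s a = ord_max /\ s b = b'.
  apply: exists_perm_pair; rewrite {}/b'.
  have [eq_ab | /n_gt0 n_gt0'] := eqVneq a b; first by subst b; rewrite !eqxx.
  by apply/esym/negbTE/eqP => /(congr1 val) /=; rewrite inordE; lia.
have b'E : b' = (if a == b then n else n.-1) :> nat by rewrite /b'; case: ifP.
exists s; split=> [||c ca cb].
- by rewrite sa sb b'E /=; case: ifP => //; lia.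
- by rewrite sa sb b'E /= => /[dup] /n_gt0 ? /negbTE ->; lia.
have : s c != s a by rewrite (inj_eq perm_inj).
have : s c != s b by rewrite (inj_eq perm_inj).
rewrite sa sb -!val_eqE /= b'E; have := ltn_ord (s c).
by case: eqVneq n_gt0 => [_ | _ /(_ isT)]; lia.
Qed.

Lemma genE (v : vert q) (s : {perm 'I_q}) :
  gen v s = (s (sval v).1).+1 + (s (sval v).2).+1.
Proof. by rewrite !ffunE. Qed.

Definition diag_vert (i : 'I_q) : vert q := exist _ (i, i) (leqnn i).

Definition diag_unique (A : {set vert q}) :=
  forall i j, diag_vert i \in A -> diag_vert j \in A -> i = j.

Lemma vert_ltVdiag (v : vert q) :
  (sval v).1 < (sval v).2 \/ exists i, v = diag_vert i.
Proof.
case: v => [[i j] /= ij]; rewrite ltn_neqAle ij andbT.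
have [/val_inj eq_ij | //] := eqVneq (val i) (val j); [right | by left].
by subst j; exists i; apply: val_inj.
Qed.

Lemma vert_swap_eq (u w : vert q) :
  (sval u).1 = (sval w).2 -> (sval u).2 = (sval w).1 -> u = w.
Proof.
case: u w => [[c d] /= cd] [[x y] /= xy] ec ed; subst c d.
have eq_xy : x = y by apply/val_inj/eqP; rewrite eqn_leq cd xy.
by subst y; apply: val_inj.
Qed.

Lemma Mq2P (A : {set vert q}) : reflect (diag_unique A) (A \in Mq2 q).
Proof.
rewrite inE; apply: (iffP existsP) => [[k /subsetP Ak] i j iA jA | uniqA].
  have diag_k l : diag_vert l \in A -> l = k.
    by move/Ak; rewrite !inE /= ltnn => /andP [/eqP].
  by rewrite (diag_k i iA) (diag_k j jA).
pose k := if [pick i | diag_vert i \in A] is Some i then i else ord0.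
exists k; apply/subsetP => v vA; rewrite !inE.
case: (vert_ltVdiag v) vA => [-> // | [i ->] iA].
rewrite /= ltnn andbb {}/k.
by case: pickP => [j jA | /(_ i)]; [rewrite (uniqA i j) // eqxx | rewrite iA].
Qed.

Lemma gen_not_dvd_lcm (A : {set vert q}) (w : vert q) :
  diag_unique A -> ~~ mdvd (gen w) (lcm_label (@gen q) (A :\ w)).
Proof.
move=> uniqA; case: w => [[x y] /= xy].
(* Only tau_a^2 beats tau_a tau_b, so a is chosen with l_{a,a} not in A. *)
have [a [b [ab_xy diag_a]]] : exists a b,
    ((a, b) = (x, y) \/ (a, b) = (y, x)) /\ (a != b -> diag_vert a \notin A).
  have [<- | nxy] := eqVneq x y; first by exists x, x; rewrite eqxx; split; [left|].
  have [yA | yA] := boolP (diag_vert y \in A); last by exists y, x; split; [right|].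
  exists x, y; split=> [|_]; first by left.
  by apply: contra nxy => xA; rewrite (uniqA _ _ xA yA).
have [s [ba ab_lt below]] := perm_top2 a b.
apply/forallPn; exists s; rewrite -ltnNge ffunE genE /=.
have -> : (s x).+1 + (s y).+1 = (s a + s b).+2 by case: ab_xy => -[-> ->]; lia.
rewrite ltnS; apply/bigmax_leqP => -[[c d] /= cd] /setD1P [uw uA]; rewrite genE /=.
have not_xy : ~~ [&& c == x & d == y] && ~~ [&& c == y & d == x].
  rewrite -negb_or; apply: contra uw => /orP [] /andP [/eqP ec /eqP ed].
    by apply/eqP/val_inj; rewrite /= ec ed.
  by apply/eqP/vert_swap_eq.
suff : s c + s d < s a + s b by lia.
apply: (top2_sum_lt (f := fun z => nat_of_ord (s z))) => //.
- apply/negP => /andP [/eqP ca /eqP da]; subst c d.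
  have [eq_ab | /diag_a /negP] := eqVneq a b.
    by subst b; case: ab_xy not_xy => -[<- <-]; rewrite eqxx.
  by apply; rewrite (_ : diag_vert a = exist _ (a, a) cd) //; apply: val_inj.
- by case: ab_xy not_xy => -[-> ->] /andP [].
- by case: ab_xy not_xy => -[-> ->] /andP [].
Qed.

Lemma gen_dvd_lcm_diag (A : {set vert q}) (w : vert q) :
    (sval w).1 < (sval w).2 ->
    diag_vert (sval w).1 \in A -> diag_vert (sval w).2 \in A ->
  mdvd (gen w) (lcm_label (@gen q) (A :\ w)).
Proof.
case: w => [[i j] /= ij] lt_ij iA jA.
have iAw : diag_vert i \in A :\ exist _ (i, j) ij.
  by rewrite !inE iA andbT -val_eqE /=; apply: contraTneq lt_ij => -[->]; rewrite ltnn.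
have jAw : diag_vert j \in A :\ exist _ (i, j) ij.
  by rewrite !inE jA andbT -val_eqE /=; apply: contraTneq lt_ij => -[->]; rewrite ltnn.
apply/forallP => s.
move: (forallP (mdvd_lcm_label (@gen q) iAw) s) (forallP (mdvd_lcm_label (@gen q) jAw) s).
by rewrite !genE /=; lia.
Qed.

End PermutationIdeal.

Theorem theorem2 (q : nat) (hq : 0 < q) : Scarf (@gen q) = Mq2 q.
Proof.
case: q hq => [//|n _]; apply/setP => A.
apply/ScarfP/Mq2P => [sepA i j iA jA | uniqA w]; last exact: gen_not_dvd_lcm.
wlog lt_ij : i j iA jA / i < j.
  move=> lt_diag; have [ij | ji | /val_inj //] := ltngtP i j; first exact: lt_diag.
  exact/esym/lt_diag.
by have := sepA (exist _ (i, j) (ltnW lt_ij)); rewrite gen_dvd_lcm_diag.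
Qed.
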